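(* Let $L$ be a countable, locally finite CW complex possessing the connected pairs property with respect to Polish spaces, and let $X$ be a compactum. Suppose that each pair $K\subset C$ of metrizable compacta with $\text{e-}\dim C\le [L]$ is $X$-connected provided $K\subset C$ is $[L]$-connected with respect to Polish spaces. Then for every metrizable space $Y$ with $Y\in AE([L],\mathcal C)$ and $\text{e-}\dim Y\le [L]$ we have $Y\in AE(X)$.
   Context: All spaces are Tychonoff and all maps continuous; a compactum is a compact Hausdorff space. For spaces $X,Y$, $Y\in AE(X)$ means every map $f\colon A\to Y$ defined on a closed subspace $A\subset X$ extends to a map $X\to Y$. For a normal space $X$ and a CW complex $L$, $\text{e-}\dim X\le [L]$ means $L\in AE(X)$. $\mathcal C$ denotes the class of metrizable compacta, and $Y\in AE([L],\mathcal C)$ means $Y\in AE(Z)$ for every metrizable compactum $Z$ with $\text{e-}\dim Z\le [L]$. For a normal space $X$, a pair of spaces $V\subset U$ is $X$-connected if for every closed $A\subset X$, every map $A\to V$ extends to a map $X\to U$; the pair is $[L]$-connected with respect to Polish spaces if it is $Z$-connected for every Polish space $Z$ with $\text{e-}\dim Z\le [L]$. $L$ possesses the connected pairs property with respect to Polish spaces if for every metrizable compactum $K$ with $\text{e-}\dim K\le [L]$ there is a metrizable compactum $C\supset K$ with $\text{e-}\dim C\le [L]$ such that the pair $K\subset C$ is $[L]$-connected with respect to Polish spaces. *)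

From HB Require Import structures.
From mathcomp Require Import all_boot all_order all_algebra.
From mathcomp Require Import all_classical all_reals all_analysis.
From mathcomp Require Import Rstruct Rstruct_topology.
From Stdlib Require Rdefinitions.
Notation R := Rdefinitions.R.

Set Implicit Arguments.
Unset Strict Implicit.
Unset Printing Implicit Defensive.

Import Order.TTheory GRing.Theory Num.Theory.
Local Open Scope classical_set_scope.
Local Open Scope ring_scope.

Definition metric_for (T : topologicalType) (d : T -> T -> R) : Prop :=
  [/\ (forall x y : T, 0 <= d x y),
      (forall x y : T, d x y = 0 <-> x = y),
      (forall x y : T, d x y = d y x),
      (forall x y z : T, d x z <= d x y + d y z) &
      (forall U : set T, open U <->
         (forall x, U x -> exists e : R, 0 < e /\ [set y | d x y < e] `<=` U))].

Definition metrizable (T : topologicalType) : Prop :=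
  exists d : T -> T -> R, metric_for d.

Definition metric_complete (T : topologicalType) (d : T -> T -> R) : Prop :=
  forall u : nat -> T,
    (forall e : R, 0 < e -> exists N : nat, forall m n : nat,
        (N <= m)%N -> (N <= n)%N -> d (u m) (u n) < e) ->
    exists x : T, forall e : R, 0 < e -> exists N : nat, forall n : nat,
        (N <= n)%N -> d (u n) x < e.

Definition separable (T : topologicalType) : Prop :=
  exists S : set T, countable S /\ dense S.

Definition polish (T : topologicalType) : Prop :=
  separable T /\ exists d : T -> T -> R, metric_for d /\ metric_complete d.

Definition compactum (T : topologicalType) : Prop :=
  compact [set: T] /\ hausdorff_space T.

Definition metrizable_compactum (T : topologicalType) : Prop :=
  compactum T /\ metrizable T.

Definition embedding (S T : topologicalType) (e : S -> T) : Prop :=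
  [/\ continuous e, injective e &
      forall U : set S, open U ->
        exists V : set T, open V /\ e @` U = V `&` range e].

Definition AE (X Y : topologicalType) : Prop :=
  forall A : set X, closed A ->
  forall f : set_type A -> Y, continuous f ->
  exists g : X -> Y, continuous g /\ forall a : set_type A, g (set_val a) = f a.

Definition edim_le (X L : topologicalType) : Prop := AE X L.

Definition AE_L_C (L Y : topologicalType) : Prop :=
  forall Z : topologicalType, metrizable_compactum Z -> edim_le Z L -> AE Z Y.

Definition X_connected (X U : topologicalType) (V : set U) : Prop :=
  forall A : set X, closed A ->
  forall f : set_type A -> set_type V, continuous f ->
  exists g : X -> U, continuous g /\
    forall a : set_type A, g (set_val a) = set_val (f a).

Definition L_connected_polish (L U : topologicalType) (V : set U) : Prop :=
  forall Z : topologicalType, polish Z -> edim_le Z L -> X_connected Z V.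

Definition connected_pairs_property (L : topologicalType) : Prop :=
  forall K : topologicalType, metrizable_compactum K -> edim_le K L ->
  exists (C : topologicalType) (e : K -> C),
    [/\ metrizable_compactum C, edim_le C L, embedding e &
        L_connected_polish L (range e)].

Definition sqnorm (n : nat) (v : 'rV[R]_n) : R := \sum_(i < n) (v ord0 i) ^+ 2.
Definition cball (n : nat) : set 'rV[R]_n := [set v | sqnorm v <= 1].
Definition oball (n : nat) : set 'rV[R]_n := [set v | sqnorm v < 1].
Definition sphere (n : nat) : set 'rV[R]_n := [set v | sqnorm v = 1].
Arguments cball n : clear implicits.
Arguments oball n : clear implicits.
Arguments sphere n : clear implicits.

(** L is (the space of) a countable, locally finite CW complex: cells are
   indexed by a (necessarily countable) set J of naturals; cell i has
   dimension dim i and characteristic map phi i : D^(dim i) -> L. *)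
Definition countable_locally_finite_CW (L : topologicalType) : Prop :=
  hausdorff_space L /\
  exists (J : set nat) (dim : nat -> nat) (phi : forall i : nat, 'rV[R]_(dim i) -> L),
  let ocell i := phi i @` oball (dim i) in
  let ccell i := phi i @` cball (dim i) in
  [/\
      (forall i, J i -> {within cball (dim i), continuous (phi i)} /\
         {in oball (dim i) &, injective (phi i)} /\
         forall O : set 'rV[R]_(dim i), open O ->
           exists O' : set L, open O' /\
             phi i @` (O `&` oball (dim i)) = O' `&` ocell i),
      ((forall x : L, exists i, J i /\ ocell i x) /\
       (forall i j x, J i -> J j -> ocell i x -> ocell j x -> i = j)),
      (forall i, J i -> exists F : set nat,
         [/\ finite_set F, F `<=` J, (forall j, F j -> (dim j < dim i)%N) &
             phi i @` sphere (dim i) `<=` \bigcup_(j in F) ocell j]),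
      (forall A : set L, (forall i, J i -> closed (A `&` ccell i)) -> closed A) &
      (forall x : L, exists U : set L, nbhs x U /\
         finite_set [set i | J i /\ U `&` ccell i !=set0])].

From mathcomp Require Import all_boot all_order all_algebra.
From mathcomp Require Import all_classical all_reals all_analysis.
From mathcomp Require Import Rstruct lra.
Set Implicit Arguments.
Unset Strict Implicit.
Unset Printing Implicit Defensive.

Import Order.TTheory Num.Theory.
Local Open Scope classical_set_scope.

(** Let f : A -> Y be a map on a closed subset A of X. Its image K is compact
   in the metrizable space Y, hence a metrizable compactum closed in Y, so
   e-dim K <= [L]. The connected pairs property embeds K into a metrizable
   compactum C with e-dim C <= [L] such that K ⊂ C is [L]-connected with
   respect to Polish spaces; by hypothesis the pair is then X-connected, so f
   extends to g : X -> C. As Y ∈ AE([L], 𝒞), the inclusion K -> Y extends to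
   h : C -> Y, and h ∘ g extends f. *)

Lemma continuousT_comp (U V W : topologicalType) (f : U -> V) (g : V -> W) :
  continuous f -> continuous g -> continuous (g \o f).
Proof. by move=> cf cg x; exact: continuous_comp (cf x) (cg (f x)). Qed.

Section set_type_topology.
Context {T : topologicalType}.

Lemma set_type_hausdorff (S : set T) :
  hausdorff_space T -> hausdorff_space (set_type S).
Proof.
rewrite !open_hausdorff => hT x y xy.
have /hT [[P Q] /= [Px Qy] [oP oQ PQ]] : set_val x != set_val y.
  by apply: contra_neq xy; exact: val_inj.
exists (set_val @^-1` P, set_val @^-1` Q) => /=.
  by rewrite !inE; move: Px Qy; rewrite !inE.
split; [by exists P|by exists Q|].
by rewrite -preimage_setI (eqP PQ) preimage_set0.
Qed.

Lemma compact_set_type (S : set T) : compact S -> compact [set: set_type S].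
Proof.
move=> cS F PF _.
have [|p [Sp clp]] := cS (set_val @ F) (fmap_proper_filter set_val PF).
  by apply: (@filterS _ F _ setT); [move=> x _; exact: set_valP|exact: filterT].
exists (exist _ p (mem_set Sp)); split => // B N FB.
rewrite nbhsE; case=> _ [[V oV <-] Vp] ON.
have FB' : (set_val @ F) (set_val @` B).
  by apply: (@filterS _ F _ B) => // b Bb; exists b.
have [_ [[b Bb <-] Vb]] := clp _ _ FB' (open_nbhs_nbhs (conj oV Vp)).
by exists b; split => //; exact: ON.
Qed.

Lemma closed_set_val_image (S : set T) (B : set (set_type S)) :
  closed S -> closed B -> closed (set_val @` B).
Proof.
move=> cS /closed_openC [V oV VE].
suff -> : set_val @` B = S `&` ~` V by exact: closedI cS (open_closedC oV).
apply/seteqP; split => [_ [b Bb <-]|x [Sx nVx]].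
  split; first exact: set_valP.
  by move=> Vb; have : (~` B) b by rewrite -VE.
exists (exist _ x (mem_set Sx)) => //.
apply: contrapT => nB; apply: nVx.
by have : (set_val @^-1` V) (exist _ x (mem_set Sx)) by rewrite VE.
Qed.

Lemma AE_closed_set_type (L : topologicalType) (S : set T) :
  closed S -> AE T L -> AE (set_type S) L.
Proof.
move=> cS aeT B cB h ch.
have lift (b : set_type (set_val @` B)) :
    {a : set_type B | set_val (set_val a) = set_val b}.
  apply: cid; have [s Bs sb] := set_valP b.
  by exists (exist _ s (mem_set Bs)).
pose phi b := proj1_sig (lift b).
have cphi : continuous phi.
  apply: continuous_comp_initial; apply: continuous_comp_initial.
  suff -> : set_val \o (set_val \o phi) = set_val by exact: initial_continuous.
  by apply: funext => b; exact: (proj2_sig (lift b)).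
have [k [ck kE]] := aeT _ (closed_set_val_image cS cB) (h \o phi)
  (continuousT_comp cphi ch).
exists (k \o set_val); split.
  by apply: continuousT_comp ck; exact: initial_continuous.
move=> a; have Ba : (set_val @` B) (set_val (set_val a)).
  by exists (set_val a) => //; exact: set_valP.
have /= := kE (exist (fun y => y \in _) _ (mem_set Ba)).
rewrite set_valE /= => ->.
by congr h; do 2 apply: val_inj; exact: (proj2_sig (lift _)).
Qed.

End set_type_topology.

Section metrizable.
Local Open Scope ring_scope.
Context {T : topologicalType}.

Lemma metric_ball_open (d : T -> T -> R) (x : T) (e : R) :
  metric_for d -> open [set y | d x y < e].
Proof.
case=> _ _ _ tri dop; apply/dop => y /= dxy.
exists (e - d x y); split; first by rewrite subr_gt0.
by move=> z /= dyz; have := tri x y z; lra.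
Qed.

Lemma metrizable_hausdorff : metrizable T -> hausdorff_space T.
Proof.
case=> d dm; have [d0 d1 dC tri _] := dm.
rewrite open_hausdorff => x y xy.
have dxy : 0 < d x y.
  by rewrite lt_neqAle d0 andbT eq_sym; apply: contra_neq xy => /d1.
exists ([set z | d x z < d x y / 2], [set z | d y z < d x y / 2]) => /=.
  by rewrite !inE /= (d1 x x).2 // (d1 y y).2 //; split; lra.
split; [exact: metric_ball_open|exact: metric_ball_open|].
apply/eqP/seteqP; split => // z [/= dxz dyz].
by have := tri x z y; have := dC z y; lra.
Qed.

Lemma metrizable_set_type (S : set T) : metrizable T -> metrizable (set_type S).
Proof.
case=> d dm; have [d0 d1 dC tri dop] := dm.
exists (fun x y => d (set_val x) (set_val y)); split => //.
  by move=> x y; split => [/d1 /val_inj|->]; last exact/d1.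
move=> U; split => [[V oV <-] x Vx | Uball].
  have [e [e0 eV]] := (dop V).1 oV _ Vx.
  by exists e; split => // y; exact: eV.
pose I := [set p : set_type S * R | 0 < p.2 /\
  [set y | d (set_val p.1) (set_val y) < p.2] `<=` U].
exists (\bigcup_(p in I) [set y | d (set_val p.1) y < p.2]).
  by apply: bigcup_open => p _; exact: metric_ball_open.
apply/seteqP; split => [y [[x r] /= [_ xrU] dxy]|x Ux]; first exact: xrU.
have [e [e0 eU]] := Uball x Ux.
by exists (x, e) => //=; rewrite (d1 _ _).2.
Qed.

End metrizable.

Definition to_range (Z T : Type) (f : Z -> T) (z : Z) : set_type (range f) :=
  exist (fun y => y \in range f) (f z) (mem_set (imageT f z)).

Lemma to_range_continuous (Z T : topologicalType) (f : Z -> T) :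
  continuous f -> continuous (to_range f).
Proof. by move=> cf; exact: continuous_comp_initial. Qed.

Lemma embedding_to_range_inverse (K C : topologicalType) (e : K -> C) :
  embedding e ->
  exists2 einv : set_type (range e) -> K,
    continuous einv & cancel (to_range e) einv.
Proof.
case=> _ ie oe.
have pre (r : set_type (range e)) : {k : K | e k = set_val r}.
  by apply: cid; have [k _ ek] := set_valP r; exists k.
pose einv r := proj1_sig (pre r).
have einvE r : e (einv r) = set_val r := proj2_sig (pre r).
exists einv; last by move=> k; apply: ie; rewrite einvE.
apply/continuousP => U oU; have [V [oV VE]] := oe U oU.
exists V => //; apply/seteqP; split => r /= rV.
  have : (V `&` range e) (set_val r) by split => //; exact: set_valP.
  rewrite -VE => -[k Uk ek].
  by have -> : einv r = k by apply: ie; rewrite einvE.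
have : (e @` U) (set_val r) by exists (einv r).
by rewrite VE => -[].
Qed.

Lemma X_connected_embedding_extension (X K C Y : topologicalType)
    (e : K -> C) (u : K -> Y) :
  embedding e -> closed (range e) -> X_connected X (range e) -> AE C Y ->
  continuous u ->
  forall A : set X, closed A -> forall f : set_type A -> K, continuous f ->
  exists g : X -> Y, continuous g /\ forall a, g (set_val a) = u (f a).
Proof.
move=> emb clR XC aeC cu A cA f cf; have [ce _ _] := emb.
have [einv ceinv einvK] := embedding_to_range_inverse emb.
have [g [cg gE]] := XC A cA _ (continuousT_comp cf (to_range_continuous ce)).
have [h [ch hE]] := aeC _ clR _ (continuousT_comp ceinv cu).
exists (h \o g); split; first exact: continuousT_comp cg ch.
by move=> a /=; rewrite gE hE /= einvK.
Qed.

Lemma compact_metrizable_compactum (Y : topologicalType) (K : set Y) :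
  metrizable Y -> compact K -> metrizable_compactum (set_type K).
Proof.
move=> mY cK; split; last exact: metrizable_set_type.
split; first exact: compact_set_type.
exact/set_type_hausdorff/metrizable_hausdorff.
Qed.

Theorem lemma3p2 :
  forall L : topologicalType,
    countable_locally_finite_CW L ->
    connected_pairs_property L ->
  forall X : topologicalType,
    compactum X ->
    (forall (C : topologicalType) (K : set C),
        metrizable_compactum C -> compact K -> edim_le C L ->
        L_connected_polish L K -> X_connected X K) ->
  forall Y : topologicalType,
    metrizable Y -> AE_L_C L Y -> edim_le Y L ->
    AE X Y.
Proof.
move=> L _ cpp X [cX _] hX Y mY aeY edY A cA f cf.
have cA' : compact [set: set_type A].
  exact/compact_set_type/(subclosed_compact cA cX).
have cK : compact (range f) := continuous_compact (continuous_subspaceT cf) cA'.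
have mK := compact_metrizable_compactum mY cK.
have eK : edim_le (set_type (range f)) L.
  exact: AE_closed_set_type (compact_closed (metrizable_hausdorff mY) cK) edY.
have [C [e [mC eC emb LcR]]] := cpp _ mK eK; have [ce _ _] := emb.
have cR : compact (range e) :=
  continuous_compact (continuous_subspaceT ce) mK.1.1.
have [g [cg gE]] := X_connected_embedding_extension emb
  (compact_closed mC.1.2 cR) (hX C _ mC cR eC LcR) (aeY C mC eC)
  (@initial_continuous _ _ set_val) cA (to_range_continuous cf).
by exists g; split => // a; rewrite gE.
Qed.
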